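(* Let $0<\delta<1/100$, $\beta\in\mathbb R$, $1<q<\infty$, and let $f\in\mathbb M^2\cap\mathbb W_q^{\beta,\beta}$ be such that its restrictions to $[-1,-1+100\delta^2]$ and to $[1-100\delta^2,1]$ are linear polynomials. Then \[ \Omega_\varphi^2(f,\delta)_{\varphi^{2\beta},q}\le c\,\delta^{1/q-1}\,\Omega_\varphi^2(f,\delta)_{\varphi^{2\beta-1+1/q},1}, \] with $c$ independent of $f$ and $\delta$.
   Context: For $x\in[-1,1]$, $\varphi(x)=\sqrt{1-x^2}$ and $w_{\beta,\beta}=\varphi^{2\beta}$; $\mathbb W_q^{\beta,\beta}=\{f:\|\varphi^{2\beta}f\|_{L_q[-1,1]}<\infty\}$. $\Delta_h^2(f,x)=f(x-h)-2f(x)+f(x+h)$ if $x\pm h\in[-1,1]$, else $0$. For a weight $w$, $\Omega_\varphi^2(f,\delta)_{w,q}=\sup_{0<h\le\delta}\|w(x)\Delta^2_{h\varphi(x)}(f,x)\|_{L_q[-1+8h^2,1-8h^2]}$. $\mathbb M^2$ is the set of convex functions on $(-1,1)$. *)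

From HB Require Import structures.
From mathcomp Require Import all_boot all_order all_algebra.
From mathcomp Require Import all_classical all_reals all_analysis.
Set Implicit Arguments. Unset Strict Implicit. Unset Printing Implicit Defensive.
Import Order.TTheory GRing.Theory Num.Theory.
Import numFieldNormedType.Exports.
Local Open Scope classical_set_scope.
Local Open Scope ring_scope.

Section Defs.
Variable R : realType.

Definition phi (x : R) : R := Num.sqrt (1 - x ^+ 2).

Definition Delta2 (f : R -> R) (h x : R) : R :=
  if (-1 <= x - h) && (x + h <= 1) then f (x - h) - 2 * f x + f (x + h) else 0.

Definition Lqnorm (a b q : R) (g : R -> R) : \bar R :=
  ((\int[lebesgue_measure]_(x in `[a, b]) ((`|g x| `^ q)%:E)) `^ q^-1)%E.

Definition Omega2 (f : R -> R) (delta : R) (w : R -> R) (q : R) : \bar R :=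
  ereal_sup [set Lqnorm (-1 + 8 * h ^+ 2) (1 - 8 * h ^+ 2) q
                  (fun x => w x * Delta2 f (h * phi x) x) | h in `]0, delta]].

(* M^2: convex functions on (-1,1) *)
Definition convex_on_open (f : R -> R) : Prop :=
  forall x y t : R, -1 < x < 1 -> -1 < y < 1 -> 0 <= t <= 1 ->
    f (t * x + (1 - t) * y) <= t * f x + (1 - t) * f y.

(* W_q^{beta,beta}: || phi^{2 beta} f ||_{L_q[-1,1]} < oo *)
Definition in_Wq (beta q : R) (f : R -> R) : Prop :=
  (Lqnorm (-1) 1 q (fun x => (phi x `^ (2 * beta) * f x)%R) < +oo)%E.

Definition linear_on (a b : R) (f : R -> R) : Prop :=
  exists c0 c1 : R, forall x, a <= x <= b -> f x = c1 * x + c0.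

End Defs.

(* For convex f the symmetric second difference with step t at y is nonnegative and
   only grows when the window [y - t, y + t] is enlarged.  So at an interior point x
   each of the three half-step differences making up the difference with step
   h phi(x) is dominated by the difference with step delta phi(y) at every y of an
   interval of length ~ delta phi(x) around x, on which phi(y) ~ phi(x); integrating
   over that interval gives phi(x)^(g+1) |Delta| <= C Omega_1 / delta, where
   g = 2 beta - 1 + 1/q.  Near the endpoints the difference vanishes because f is
   linear there.  Finally |phi^(2 beta) Delta|^q = (phi^(g+1) |Delta|)^(q-1) phi^g |Delta|,
   and integrating the last factor once more against Omega_1 gives the L_q bound. *)

From HB Require Import structures.
From mathcomp Require Import all_boot all_order all_algebra.
From mathcomp Require Import all_classical all_reals all_analysis.
From mathcomp Require Import ring lra.
Import Order.TTheory GRing.Theory Num.Theory.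
Import numFieldNormedType.Exports.
Set Implicit Arguments. Unset Strict Implicit. Unset Printing Implicit Defensive.
Local Open Scope classical_set_scope.
Local Open Scope ring_scope.

Section NonnegIntegral.
Local Open Scope ereal_scope.
Variable R : realType.
Notation mu := (@lebesgue_measure R).
Import HBNNSimple.

(* Unlike [ge0_le_integral], no measurability is required: the nonnegative
   integral is a supremum over simple minorants, and f is not assumed measurable. *)
Lemma ge0_le_subset_integral (D1 D2 : set R) (f1 f2 : R -> \bar R) :
  (forall x, D1 x -> 0 <= f1 x) -> (forall x, D2 x -> 0 <= f2 x) ->
  (forall x, D1 x -> D2 x /\ f1 x <= f2 x) ->
  \int[mu]_(x in D1) f1 x <= \int[mu]_(x in D2) f2 x.
Proof.
move=> f10 f20 f12.
rewrite (ge0_integralE mu f10) (ge0_integralE mu f20).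
apply: ge_ereal_sup => _ [h hf1 <-]; apply: ereal_sup_ubound.
exists h => // x; apply: le_trans (hf1 x) _; rewrite /patch.
case: ifPn => [|_]; first by rewrite inE => /f12[D2x le12]; rewrite ifT ?inE.
by case: ifPn => //; rewrite inE => /f20.
Qed.

Lemma ge0_integralZl_le (D : set R) (f : R -> \bar R) (k : R) :
  (0 <= k)%R -> (forall x, D x -> 0 <= f x) ->
  \int[mu]_(x in D) (k%:E * f x) <= k%:E * \int[mu]_(x in D) f x.
Proof.
move=> k0 f0; have [->|kn0] := eqVneq k 0%R.
  by rewrite mul0e integral0_eq // => x _; rewrite mul0e.
have kgt0 : (0 < k)%R by rewrite lt_neqAle eq_sym kn0.
have kf0 x : D x -> 0 <= k%:E * f x by move=> Dx; rewrite mule_ge0 ?lee_fin ?f0.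
rewrite (ge0_integralE mu f0) (ge0_integralE mu kf0).
apply: ge_ereal_sup => _ [h hf <-].
have kV0 : (0 <= k^-1)%R by rewrite invr_ge0.
pose h' := scale_nnsfun h kV0.
have -> : sintegral mu h = k%:E * sintegral mu h'.
  rewrite (_ : sintegral mu h' = sintegral mu (cst k^-1 \* h)%R) //.
  by rewrite sintegralrM muleA -EFinM divff ?gt_eqF // mul1e.
rewrite lee_wpmul2l ?lee_fin //; apply: ereal_sup_ubound; exists h' => // x.
have := hf x; rewrite /patch /=; case: ifPn => _.
  move=> hx; rewrite -(@lee_pmul2l _ k%:E) ?lte_fin //.
  by rewrite -EFinM mulrA divff ?gt_eqF // mul1r.
by move=> hx; rewrite (_ : h x = 0%R) ?mulr0 //; apply/eqP; rewrite eq_le fun_ge0 andbT -lee_fin.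
Qed.

Lemma ge0_integral_ge_window (D : set R) (F : R -> \bar R) (u e c : R) :
  (0 <= c)%R -> (0 < e)%R -> (forall x, D x -> 0 <= F x) ->
  (forall y, (u - e <= y <= u + e)%R -> D y /\ c%:E <= F y) ->
  (c * (2 * e))%:E <= \int[mu]_(x in D) F x.
Proof.
move=> c0 e0 F0 cF.
apply: (le_trans _ (@ge0_le_subset_integral `[(u - e)%R, (u + e)%R] D (cst c%:E) F _ F0 _)).
- rewrite integral_cst //= lebesgue_measure_itv /= ifT ?lte_fin; last by lra.
  by rewrite -EFinD -EFinM (_ : u + e - (u - e) = 2 * e)%R //; ring.
- by move=> x _; rewrite lee_fin.
- by move=> y /=; rewrite in_itv /= => /cF.
Qed.

Lemma Lqnorm1 (a b : R) (g : R -> R) :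
  Lqnorm a b 1 g = \int[mu]_(x in `[a, b]) (`|g x|)%:E.
Proof.
rewrite /Lqnorm invr1 poweRe1; last by apply: integral_ge0 => x _; rewrite lee_fin powR_ge0.
by apply: eq_integral => x _; rewrite powRr1.
Qed.

Lemma Lqnorm_le_of_L1 (a b q M r : R) (u v : R -> R) : (0 < q)%R -> (0 <= M)%R ->
  (forall x, (a <= x <= b)%R -> (`|u x| `^ q <= M * `|v x|)%R) ->
  \int[mu]_(x in `[a, b]) (`|v x|)%:E <= r%:E ->
  Lqnorm a b q u <= ((M * r) `^ q^-1)%:E.
Proof.
move=> q0 M0 uMv vr; rewrite /Lqnorm.
have r0 : (0 <= r)%R by rewrite -lee_fin (le_trans _ vr) ?integral_ge0.
set E := \int[mu]_(x in _) _.
have E0 : 0 <= E by apply: integral_ge0 => x _; rewrite lee_fin powR_ge0.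
have EMr : E <= (M * r)%:E.
  apply: (le_trans (@ge0_le_subset_integral `[a, b] `[a, b] _
                      (fun x => M%:E * (`|v x|)%:E) _ _ _)).
  - by move=> x _; rewrite lee_fin powR_ge0.
  - by move=> x _; rewrite mule_ge0 ?lee_fin.
  - move=> x abx; split=> //; rewrite -EFinM lee_fin; apply: uMv.
    by move: abx; rewrite /= in_itv.
  have v0 x : `[a, b]%classic x -> 0 <= (`|v x|)%:E by rewrite lee_fin.
  apply: (le_trans (ge0_integralZl_le M0 v0)).
  by rewrite EFinM lee_wpmul2l ?lee_fin.
have Efin : E \is a fin_num by rewrite ge0_fin_numE // (le_lt_trans EMr) ?ltey.
rewrite -(fineK Efin) poweR_EFin lee_fin ge0_ler_powR ?nnegrE ?fine_ge0 ?mulr_ge0 //.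
- by rewrite invr_ge0 ltW.
- by rewrite -lee_fin fineK.
Qed.

Lemma Lqnorm_le_Omega2 (f w : R -> R) (q d h : R) : (0 < h <= d)%R ->
  Lqnorm (-1 + 8 * h ^+ 2)%R (1 - 8 * h ^+ 2)%R q
    (fun x => (w x * Delta2 f (h * phi x) x)%R) <= Omega2 f d w q.
Proof. by move=> hd; apply: ereal_sup_ubound; exists h; rewrite //= in_itv. Qed.
End NonnegIntegral.

Section SecondDifference.
Variable R : realType.
Implicit Types (f : R -> R) (s t x y z : R).

Definition sdiff2 f t y := f (y - t) - 2 * f y + f (y + t).

Lemma Delta2E f h x : -1 <= x - h -> x + h <= 1 -> Delta2 f h x = sdiff2 f h x.
Proof. by move=> xl xr; rewrite /Delta2 xl xr. Qed.

Lemma sdiff2_halve f t x : sdiff2 f t x =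
  sdiff2 f (t / 2) (x - t / 2) + 2 * sdiff2 f (t / 2) x + sdiff2 f (t / 2) (x + t / 2).
Proof.
rewrite /sdiff2 subrK addrK.
have -> : x - t / 2 - t / 2 = x - t by field.
have -> : x + t / 2 + t / 2 = x + t by field.
ring.
Qed.

Lemma sdiff2_linear f a b t x : linear_on a b f -> 0 <= t ->
  a <= x - t -> x + t <= b -> sdiff2 f t x = 0.
Proof.
move=> [c0 [c1 fE]] t0 xl xr.
rewrite /sdiff2 !fE; try by apply/andP; split; lra.
ring.
Qed.

Variable f : R -> R.
Hypothesis cf : convex_on_open f.

Lemma convex_on_open_chord a m b : -1 < a -> b < 1 -> a <= m <= b ->
  (b - a) * f m <= (b - m) * f a + (m - a) * f b.
Proof.
move=> a1 b1 /andP[am mb]; have [ab|ab] := eqVneq a b.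
  have -> : m = a by apply: le_anti; rewrite am andbT ab.
  by rewrite ab !subrr !mul0r addr0.
have ba0 : 0 < b - a by rewrite subr_gt0 lt_neqAle ab (le_trans am mb).
set t := (b - m) / (b - a).
have t01 : 0 <= t <= 1.
  by apply/andP; split; [apply: divr_ge0; lra | rewrite ler_pdivrMr // mul1r; lra].
have mE : m = t * a + (1 - t) * b by rewrite /t; field; lra.
have a11 : -1 < a < 1 by apply/andP; split; lra.
have b11 : -1 < b < 1 by apply/andP; split; lra.
have fm := cf a11 b11 t01; rewrite -mE -(ler_pM2l ba0) in fm.
suff -> : (b - m) * f a + (m - a) * f b = (b - a) * (t * f a + (1 - t) * f b) by [].
rewrite /t; field; lra.
Qed.

Lemma sdiff2_le_step s t y : 0 <= s <= t -> -1 < y - t -> y + t < 1 ->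
  sdiff2 f s y <= sdiff2 f t y.
Proof.
move=> /andP[s0 st] yl yr; rewrite /sdiff2.
have [t0|t0] := eqVneq t 0; first by have -> : s = t by lra.
have c1 := @convex_on_open_chord (y - t) (y - s) (y + t) yl yr.
have c2 := @convex_on_open_chord (y - t) (y + s) (y + t) yl yr.
suff : f (y - s) + f (y + s) <= f (y - t) + f (y + t) by lra.
rewrite -(ler_pM2l (_ : 0 < y + t - (y - t))); last by lra.
have /c1 : y - t <= y - s <= y + t by apply/andP; split; lra.
have /c2 : y - t <= y + s <= y + t by apply/andP; split; lra.
nra.
Qed.

Lemma sdiff2_ge0 t y : 0 <= t -> -1 < y - t -> y + t < 1 -> 0 <= sdiff2 f t y.
Proof.
move=> t0 yl yr; have := @sdiff2_le_step 0 t y; rewrite lexx t0 => /(_ isT yl yr).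
by rewrite /sdiff2 subr0 addr0 (_ : f y - 2 * f y + f y = 0) //; ring.
Qed.

Lemma sdiff2_le_shiftr s e z : 0 <= s -> 0 <= e -> -1 < z - s -> z + s + 2 * e < 1 ->
  sdiff2 f s z <= sdiff2 f (s + e) (z + e).
Proof.
move=> s0 e0 zl zr; rewrite /sdiff2.
have -> : z + e - (s + e) = z - s by ring.
have -> : z + e + (s + e) = z + s + 2 * e by ring.
have [se0|se0] := eqVneq (s + 2 * e) 0.
  have -> : e = 0 by lra.
  by rewrite mulr0 !addr0.
have c1 := @convex_on_open_chord z (z + e) (z + s + 2 * e) (_ : -1 < z) zr.
have c2 := @convex_on_open_chord z (z + s) (z + s + 2 * e) (_ : -1 < z) zr.
suff : 2 * f (z + e) + f (z + s) <= 2 * f z + f (z + s + 2 * e) by lra.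
rewrite -(ler_pM2l (_ : 0 < z + s + 2 * e - z)); last by lra.
have /c1 : z <= z + e <= z + s + 2 * e by apply/andP; split; lra.
have /c2 : z <= z + s <= z + s + 2 * e by apply/andP; split; lra.
nra.
Qed.

Lemma sdiff2_le_shiftl s e z : 0 <= s -> 0 <= e -> -1 < z - s - 2 * e -> z + s < 1 ->
  sdiff2 f s z <= sdiff2 f (s + e) (z - e).
Proof.
move=> s0 e0 zl zr; rewrite /sdiff2.
have -> : z - e - (s + e) = z - s - 2 * e by ring.
have -> : z - e + (s + e) = z + s by ring.
have [se0|se0] := eqVneq (s + 2 * e) 0.
  have -> : e = 0 by lra.
  by rewrite mulr0 !subr0.
have c1 := @convex_on_open_chord (z - s - 2 * e) (z - s) z zl (_ : z < 1).
have c2 := @convex_on_open_chord (z - s - 2 * e) (z - e) z zl (_ : z < 1).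
suff : f (z - s) + 2 * f (z - e) <= f (z - s - 2 * e) + 2 * f z by lra.
rewrite -(ler_pM2l (_ : 0 < z - (z - s - 2 * e))); last by lra.
have /c1 : z - s - 2 * e <= z - s <= z by apply/andP; split; lra.
have /c2 : z - s - 2 * e <= z - e <= z by apply/andP; split; lra.
nra.
Qed.

Lemma sdiff2_le_cover s t z y : 0 <= s -> s + `|y - z| <= t ->
  -1 < y - t -> y + t < 1 -> sdiff2 f s z <= sdiff2 f t y.
Proof.
move=> s0 st yl yr; have [zy|yz] := lerP z y.
  rewrite ger0_norm ?subr_ge0 // in st.
  apply: (le_trans (@sdiff2_le_shiftr s (y - z) z s0 _ _ _)); try lra.
  by rewrite subrKC sdiff2_le_step //; apply/andP; split; lra.
rewrite ltr0_norm ?subr_lt0 // in st.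
apply: (le_trans (@sdiff2_le_shiftl s (z - y) z s0 _ _ _)); try lra.
by rewrite subKr sdiff2_le_step //; apply/andP; split; lra.
Qed.
End SecondDifference.

Section PhiGeometry.
Variable R : realType.
Implicit Types (a b d s x y : R).

Lemma ler_of_sqr a b : 0 <= b -> a ^+ 2 <= b ^+ 2 -> a <= b.
Proof.
move=> b0 ab; have [a0|a0] := lerP a 0; first exact: le_trans a0 b0.
by rewrite -ler_sqr ?nnegrE // ltW.
Qed.

Lemma phiN x : phi (- x) = phi x.
Proof. by rewrite /phi sqrrN. Qed.

Lemma phi_sqr x : -1 <= x <= 1 -> phi x ^+ 2 = 1 - x ^+ 2.
Proof.
move=> /andP[x1 x2]; rewrite /phi sqr_sqrtr //.
have : 0 <= (1 - x) * (1 + x) by apply: mulr_ge0; lra.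
lra.
Qed.

Lemma phi_gt0 x : -1 < x < 1 -> 0 < phi x.
Proof.
move=> /andP[x1 x2]; rewrite /phi sqrtr_gt0.
have : 0 < (1 - x) * (1 + x) by apply: mulr_gt0; lra.
lra.
Qed.

Lemma phi_sqr_le_dist x : -1 <= x <= 1 -> phi x ^+ 2 <= 2 * (1 + x).
Proof.
move=> x11; rewrite phi_sqr //; case/andP: x11 => x1 x2.
have : 0 <= (1 + x) * (1 + x) by apply: mulr_ge0; lra.
lra.
Qed.

Lemma step_le_near_end d x s : -1 <= x <= 1 -> 1 + x <= 80 * d ^+ 2 ->
  0 <= s <= d * phi x -> s <= 13 * d ^+ 2.
Proof.
move=> x11 xd /andP[s0 sd]; apply: ler_of_sqr; first by have := sqr_ge0 d; lra.
have p2 := phi_sqr_le_dist x11.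
have : s ^+ 2 <= d ^+ 2 * phi x ^+ 2 by rewrite -exprMn ler_sqr ?nnegrE //; lra.
have : d ^+ 2 * phi x ^+ 2 <= d ^+ 2 * (160 * d ^+ 2) by rewrite ler_wpM2l ?sqr_ge0 //; lra.
have := sqr_ge0 (d ^+ 2); rewrite exprMn -expr2; lra.
Qed.

Lemma step_le_distl d x : 0 < d -> -1 <= x <= 1 -> 80 * d ^+ 2 <= 1 + x ->
  d * phi x <= (1 + x) / 6.
Proof.
move=> d0 x11 xd; apply: ler_of_sqr; first by have := sqr_ge0 d; lra.
have p2 := phi_sqr_le_dist x11.
have : d ^+ 2 * phi x ^+ 2 <= d ^+ 2 * (2 * (1 + x)) by rewrite ler_wpM2l ?sqr_ge0.
have : d ^+ 2 * (2 * (1 + x)) <= (1 + x) / 80 * (2 * (1 + x)).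
  by rewrite ler_wpM2r //; have := sqr_ge0 d; lra.
have := sqr_ge0 (1 + x); rewrite exprMn; lra.
Qed.

Lemma step_le_distr d x : 0 < d -> -1 <= x <= 1 -> 80 * d ^+ 2 <= 1 - x ->
  d * phi x <= (1 - x) / 6.
Proof.
move=> d0 /andP[x1 x2] xd.
by rewrite -phiN step_le_distl //; apply/andP; split; lra.
Qed.

Lemma step_le_phi_sqr d x : 0 < d -> 80 * d ^+ 2 <= 1 + x -> 80 * d ^+ 2 <= 1 - x ->
  d * phi x <= phi x ^+ 2 / 8.
Proof.
move=> d0 xl xr; have d2 : 0 < d ^+ 2 by rewrite exprn_gt0.
have x11 : -1 <= x <= 1 by apply/andP; split; lra.
have p0 : 0 < phi x by apply: phi_gt0; apply/andP; split; lra.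
have dp : 80 * d ^+ 2 <= phi x ^+ 2.
  rewrite phi_sqr //; have [x0|x0] := lerP 0 x.
    have : 0 <= x * (1 - x) by apply: mulr_ge0; lra.
    lra.
  have : 0 <= - x * (1 + x) by apply: mulr_ge0; lra.
  lra.
have : 8 * d <= phi x by apply: ler_of_sqr; rewrite ?exprMn; lra.
by move=> /(ler_wpM2r (ltW p0)); rewrite expr2; lra.
Qed.

Lemma phi_near d x y : 0 < d -> 80 * d ^+ 2 <= 1 + x -> 80 * d ^+ 2 <= 1 - x ->
  `|y - x| <= 6 / 10 * (d * phi x) -> 9 / 10 * phi x <= phi y <= 11 / 10 * phi x.
Proof.
move=> d0 xl xr; rewrite ler_norml => /andP[eL eU].
have d2 : 0 < d ^+ 2 by rewrite exprn_gt0.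
have x11 : -1 <= x <= 1 by apply/andP; split; lra.
have p0 : 0 < phi x by apply: phi_gt0; apply/andP; split; lra.
have dpp := step_le_phi_sqr d0 xl xr.
have p2 := phi_sqr x11; have p21 : phi x ^+ 2 <= 1 by have := sqr_ge0 x; lra.
set p := phi x in p0 dpp eL eU p2 p21 *.
set E := 6 / 10 * (d * p) in eL eU.
have E0 : 0 <= E by rewrite /E; have := mulr_gt0 d0 p0; lra.
have Ep : E <= 3 / 40 * p ^+ 2 by rewrite /E; lra.
clearbody E.
have E2 : E ^+ 2 <= 1 / 100 * p ^+ 2.
  have : E * E <= E * (3 / 40 * p ^+ 2) by rewrite ler_wpM2l.
  have : E * (3 / 40 * p ^+ 2) <= (3 / 40 * p ^+ 2) * (3 / 40 * p ^+ 2).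
    by rewrite ler_wpM2r //; have := sqr_ge0 p; lra.
  have : p ^+ 2 * p ^+ 2 <= p ^+ 2 by rewrite ler_piMl ?sqr_ge0.
  rewrite expr2; lra.
have e2 : (y - x) ^+ 2 <= E ^+ 2.
  have : 0 <= (E - (y - x)) * (E + (y - x)) by apply: mulr_ge0; lra.
  lra.
have xe : - E <= x * (y - x) <= E.
  case/andP: x11 => x1 x2; apply/andP; split.
    have : 0 <= (1 - x) * (E - (y - x)) by apply: mulr_ge0; lra.
    have : 0 <= (1 + x) * (E + (y - x)) by apply: mulr_ge0; lra.
    lra.
  have : 0 <= (1 - x) * (E + (y - x)) by apply: mulr_ge0; lra.
  have : 0 <= (1 + x) * (E - (y - x)) by apply: mulr_ge0; lra.
  lra.
have y2 : 1 - y ^+ 2 = p ^+ 2 - 2 * (x * (y - x)) - (y - x) ^+ 2 by rewrite p2; ring.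
have py2 : phi y ^+ 2 = 1 - y ^+ 2.
  by rewrite /phi sqr_sqrtr //; have := sqr_ge0 (y - x); lra.
have e0 := sqr_ge0 (y - x); apply/andP; split; apply: ler_of_sqr.
- exact: sqrtr_ge0.
- by rewrite py2 exprMn; lra.
- lra.
- by rewrite py2 exprMn; lra.
Qed.

Lemma near_window d x y : 0 < d -> 80 * d ^+ 2 <= 1 + x -> 80 * d ^+ 2 <= 1 - x ->
  `|y - x| <= 6 / 10 * (d * phi x) ->
  [/\ -1 + 8 * d ^+ 2 <= y <= 1 - 8 * d ^+ 2, -1 < y - d * phi y & y + d * phi y < 1].
Proof.
move=> d0 xl xr yx; have d2 : 0 < d ^+ 2 by rewrite exprn_gt0.
have x11 : -1 <= x <= 1 by apply/andP; split; lra.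
case/andP: (phi_near d0 xl xr yx) => _ pyx.
have dpy := ler_wpM2l (ltW d0) pyx.
have dl := step_le_distl d0 x11 xl.
have dr := step_le_distr d0 x11 xr.
move: yx; rewrite ler_norml => /andP[yxl yxr].
have py0 : 0 <= phi y by apply: sqrtr_ge0.
have px0 : 0 <= d * phi x := mulr_ge0 (ltW d0) (sqrtr_ge0 _).
by split; [apply/andP; split | |]; lra.
Qed.
End PhiGeometry.

Section PowerAlgebra.
Variable R : realType.

Lemma powR_weight_interpolate (beta q g A t D : R) : 1 < q -> g = 2 * beta - 1 + q^-1 ->
  0 < t -> 0 <= D -> t `^ (g + 1) * D <= A ->
  (t `^ (2 * beta) * D) `^ q <= A `^ (q - 1) * (t `^ g * D).
Proof.
move=> q1 gE t0 D0 tDA; have q0 : q != 0 by rewrite gt_eqF //; lra.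
have -> : (t `^ (2 * beta) * D) `^ q = (t `^ (g + 1) * D) `^ (q - 1) * (t `^ g * D).
  rewrite !powRM ?powR_ge0 // -!powRrM.
  have -> : t `^ (2 * beta * q) = t `^ ((g + 1) * (q - 1)) * t `^ g.
    by rewrite -powRD ?(gt_eqF t0) ?implybT //; congr (_ `^ _); rewrite gE; field.
  have -> : D `^ q = D `^ (q - 1) * D `^ 1 by rewrite -powRD subrK ?(negbTE q0).
  rewrite powRr1 //.
  ring.
rewrite ler_wpM2r ?mulr_ge0 ?powR_ge0 // ge0_ler_powR ?nnegrE ?mulr_ge0 ?powR_ge0 //.
  by rewrite subr_ge0 ltW.
exact: le_trans (mulr_ge0 (powR_ge0 _ _) D0) tDA.
Qed.

Lemma powR_interpolation_const (K r d q : R) : 0 < K -> 0 <= r -> 0 < d -> 1 < q ->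
  ((K * r / d) `^ (q - 1) * r) `^ q^-1 = K `^ (1 - q^-1) * d `^ (q^-1 - 1) * r.
Proof.
move=> K0 r0 d0 q1; have q0 : q != 0 by rewrite gt_eqF //; lra.
have dV0 : 0 <= d^-1 by rewrite invr_ge0 ltW.
rewrite powRM ?powR_ge0 // -powRrM (_ : (q - 1) * q^-1 = 1 - q^-1); last by field.
rewrite !powRM ?mulr_ge0 ?(ltW K0) //.
have -> : d^-1 `^ (1 - q^-1) = d `^ (q^-1 - 1).
  by rewrite -powR_inv1 ?(ltW d0) // -powRrM; congr (_ `^ _); ring.
have rE : r `^ (1 - q^-1) * r `^ q^-1 = r.
  by rewrite -powRD ?subrK ?powRr1 // oner_eq0.
by rewrite -[in RHS]rE; ring.
Qed.
End PowerAlgebra.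

Section WeightedBounds.
Variable R : realType.
Notation mu := (@lebesgue_measure R).

Definition kappa (g : R) : R := Num.min ((9 / 10) `^ g) ((11 / 10) `^ g).

Lemma kappa_gt0 g : 0 < kappa g.
Proof. by rewrite /kappa lt_min !powR_gt0. Qed.

Lemma kappa_powR_le g p t : 0 < p -> 9 / 10 * p <= t <= 11 / 10 * p ->
  kappa g * p `^ g <= t `^ g.
Proof.
move=> p0 /andP[tl tu]; have t0 : 0 < t by lra.
have [g0|g0] := lerP 0 g.
  apply: (@le_trans _ _ ((9 / 10 * p) `^ g)).
    by rewrite powRM ?ler_wpM2r ?powR_ge0 ?ge_min ?lexx //; lra.
  by apply: ge0_ler_powR; rewrite ?nnegrE //; lra.
apply: (@le_trans _ _ ((11 / 10 * p) `^ g)).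
  by rewrite powRM ?ler_wpM2r ?powR_ge0 ?ge_min ?lexx ?orbT //; lra.
have powRE u : u `^ g = (u `^ (- g))^-1 by rewrite -powRN opprK.
rewrite !powRE lef_pV2 ?posrE ?powR_gt0 //; try lra.
by apply: ge0_ler_powR; rewrite ?nnegrE //; lra.
Qed.

Variables (f : R -> R) (g d r : R).
Hypothesis cf : convex_on_open f.
Hypothesis d0 : 0 < d.
Hypothesis L1_le : (\int[mu]_(y in `[(-1 + 8 * d ^+ 2)%R, (1 - 8 * d ^+ 2)%R])
  (`|phi y `^ g * Delta2 f (d * phi y) y|)%:E <= r%:E)%E.

Lemma L1_bound_ge0 : 0 <= r.
Proof. by rewrite -lee_fin (le_trans _ L1_le) ?integral_ge0. Qed.

Lemma local_sdiff2_le x z s : 80 * d ^+ 2 <= 1 + x -> 80 * d ^+ 2 <= 1 - x ->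
  0 <= s <= d * phi x -> `|z - x| <= s / 2 ->
  kappa g * phi x `^ g * sdiff2 f (s / 2) z * (d * phi x / 5) <= r.
Proof.
move=> xl xr /andP[s0 sdp] zx.
have d2 : 0 < d ^+ 2 by rewrite exprn_gt0.
have p0 : 0 < phi x by apply: phi_gt0; apply/andP; split; lra.
have c0 : 0 <= kappa g * phi x `^ g := mulr_ge0 (ltW (kappa_gt0 g)) (powR_ge0 _ _).
have [v0|v0] := ltP (sdiff2 f (s / 2) z) 0.
  have w0 : 0 <= d * phi x / 5 by rewrite divr_ge0 // mulr_ge0 // ltW.
  by apply: le_trans L1_bound_ge0; rewrite mulr_le0_ge0 // mulr_ge0_le0 // ltW.
rewrite (_ : d * phi x / 5 = 2 * (d * phi x / 10)); last by field.
rewrite -lee_fin; apply: le_trans L1_le.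
apply: (@ge0_integral_ge_window _ _ _ z).
- exact: mulr_ge0.
- by rewrite divr_gt0 ?mulr_gt0.
- by move=> y _; rewrite lee_fin.
move=> y /andP[yl yr].
have yz : `|y - z| <= d * phi x / 10 by rewrite ler_norml; apply/andP; split; lra.
have yx : `|y - x| <= 6 / 10 * (d * phi x).
  by have := ler_normD (y - z) (z - x); rewrite addrA subrK; lra.
have /andP[pyl pyu] := phi_near d0 xl xr yx.
have [ywin yl1 yr1] := near_window d0 xl xr yx.
split; first by rewrite /= in_itv.
rewrite lee_fin Delta2E; [|lra|lra].
apply: le_trans (ler_norm _); apply: ler_pM => //.
  by apply: kappa_powR_le => //; rewrite pyl pyu.
apply: sdiff2_le_cover => //; first by lra.
have := ler_wpM2l (ltW d0) pyl.
lra.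
Qed.

(* The constant 20 = 4 * 5: the halving identity has total weight 4, and each
   half-step difference is controlled on an interval of length d phi(x) / 5. *)
Lemma interior_sdiff2_le x s : 80 * d ^+ 2 <= 1 + x -> 80 * d ^+ 2 <= 1 - x ->
  0 <= s <= d * phi x -> phi x `^ (g + 1) * sdiff2 f s x <= 20 / kappa g * r / d.
Proof.
move=> xl xr sx; have /andP[s0 _] := sx.
have d2 := exprn_gt0 2 d0.
have p0 : 0 < phi x by apply: phi_gt0; apply/andP; split; lra.
have k0 := kappa_gt0 g.
have s2 : 0 <= s / 2 by rewrite divr_ge0.
have b1 := @local_sdiff2_le x (x - s / 2) s xl xr sx.
have b2 := @local_sdiff2_le x x s xl xr sx.
have b3 := @local_sdiff2_le x (x + s / 2) s xl xr sx.
rewrite addrAC subrr add0r normrN ger0_norm // in b1.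
rewrite subrr normr0 in b2.
rewrite addrAC subrr add0r ger0_norm // in b3.
rewrite -(ler_pM2l (mulr_gt0 k0 d0)) (_ : _ * (20 / kappa g * r / d) = 20 * r); last first.
  by field; rewrite !gt_eqF.
rewrite powRD ?(gt_eqF p0) ?implybT // powRr1 ?(ltW p0) // sdiff2_halve.
move/(_ (lexx _)): b1 => b1; move/(_ s2): b2 => b2; move/(_ (lexx _)): b3 => b3.
rewrite mulrA; set Q := kappa g * d * _.
have eQ w : kappa g * phi x `^ g * w * (d * phi x / 5) = Q * w / 5 by rewrite /Q; ring.
rewrite !eQ in b1 b2 b3; lra.
Qed.

Lemma weighted_Delta2_le x h :
  linear_on (-1) (-1 + 100 * d ^+ 2) f -> linear_on (1 - 100 * d ^+ 2) 1 f ->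
  0 < h <= d -> -1 < x < 1 ->
  phi x `^ (g + 1) * `|Delta2 f (h * phi x) x| <= 20 / kappa g * r / d.
Proof.
move=> linL linR /andP[h0 hd] x11'.
have d2 := exprn_gt0 2 d0; have p0 := phi_gt0 x11'.
have x11 : -1 <= x <= 1 by case/andP: x11' => *; apply/andP; split; lra.
have k0 := kappa_gt0 g; have r0 := L1_bound_ge0.
have rhs0 : 0 <= 20 / kappa g * r / d.
  by rewrite !(divr_ge0, mulr_ge0, invr_ge0, ler0n, ltW k0, ltW d0).
have sx : 0 <= h * phi x <= d * phi x.
  by rewrite mulr_ge0 ?ler_wpM2r ?(ltW h0) ?(ltW p0).
rewrite /Delta2; case: ifPn => [/andP[sl sr]|_]; last by rewrite normr0 mulr0.
rewrite -/(sdiff2 f (h * phi x) x); set s := h * phi x in sx sl sr *.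
case/andP: (sx) => s0 sdp.
have [xL|xL] := lerP (1 + x) (80 * d ^+ 2).
  have s13 := step_le_near_end x11 xL sx.
  by rewrite (sdiff2_linear linL) ?normr0 ?mulr0 //; lra.
have [xR|xR] := lerP (1 - x) (80 * d ^+ 2).
  have s13 : s <= 13 * d ^+ 2.
    by apply: (@step_le_near_end _ d (- x)); rewrite ?phiN ?opprK //; apply/andP; split; lra.
  by rewrite (sdiff2_linear linR) ?normr0 ?mulr0 //; lra.
have dl := step_le_distl d0 x11 (ltW xL).
have dr := step_le_distr d0 x11 (ltW xR).
rewrite ger0_norm; first exact: interior_sdiff2_le (ltW xL) (ltW xR) sx.
apply: (sdiff2_ge0 cf); lra.
Qed.

Lemma Lqnorm_weighted_Delta2_le beta q h : 1 < q -> g = 2 * beta - 1 + q^-1 ->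
  linear_on (-1) (-1 + 100 * d ^+ 2) f -> linear_on (1 - 100 * d ^+ 2) 1 f ->
  0 < h <= d ->
  (\int[mu]_(x in `[(-1 + 8 * h ^+ 2)%R, (1 - 8 * h ^+ 2)%R])
     (`|phi x `^ g * Delta2 f (h * phi x) x|)%:E <= r%:E)%E ->
  (Lqnorm (-1 + 8 * h ^+ 2)%R (1 - 8 * h ^+ 2)%R q
     (fun x => (phi x `^ (2 * beta) * Delta2 f (h * phi x) x)%R) <=
   ((20 / kappa g) `^ (1 - q^-1) * d `^ (q^-1 - 1) * r)%:E)%E.
Proof.
move=> q1 gE linL linR hd Lh.
have K0 : 0 < 20 / kappa g by rewrite divr_gt0 ?kappa_gt0.
rewrite -(powR_interpolation_const K0 L1_bound_ge0 d0 q1).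
apply: Lqnorm_le_of_L1 Lh; [lra | exact: powR_ge0 | move=> x /andP[xl xr]].
have h2 : 0 < h ^+ 2 by case/andP: hd => h0 _; rewrite exprn_gt0.
have x11 : -1 < x < 1 by apply/andP; split; lra.
rewrite !normrM !(@ger0_norm _ (_ `^ _)) ?powR_ge0 //.
apply: powR_weight_interpolate gE _ _ _ => //; first exact: phi_gt0.
by have := weighted_Delta2_le linL linR hd x11.
Qed.
End WeightedBounds.

Unset Implicit Arguments.

Theorem lemma5p2 (R : realType) (beta q : R) (hq : 1 < q) :
  exists c : R, 0 < c /\
  forall (delta : R) (f : R -> R),
    0 < delta < 1 / 100 ->
    convex_on_open f ->
    in_Wq beta q f ->
    linear_on (-1) (-1 + 100 * delta ^+ 2) f ->
    linear_on (1 - 100 * delta ^+ 2) 1 f ->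
    (Omega2 f delta (fun x => (phi x `^ (2 * beta))%R) q <=
       ((c * delta `^ (q^-1 - 1))%R)%:E *
       Omega2 f delta (fun x => (phi x `^ (2 * beta - 1 + q^-1))%R) 1)%E.
Proof.
set g := 2 * beta - 1 + q^-1.
have K0 : 0 < (20 / kappa g) `^ (1 - q^-1) by rewrite powR_gt0 ?divr_gt0 ?kappa_gt0.
exists ((20 / kappa g) `^ (1 - q^-1)); split => //.
move=> d f /andP[d0 _] cf _ linL linR.
set O1 := Omega2 f d (fun x => phi x `^ g) 1.
have L1_le_O1 h : 0 < h <= d ->
    (\int[lebesgue_measure]_(x in `[(-1 + 8 * h ^+ 2)%R, (1 - 8 * h ^+ 2)%R])
       (`|phi x `^ g * Delta2 f (h * phi x) x|)%:E <= O1)%E.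
  by move=> hd; rewrite -Lqnorm1; exact: Lqnorm_le_Omega2.
have dd : 0 < d <= d by rewrite d0 lexx.
have [->|O1oo] := eqVneq O1 +oo%E.
  by rewrite gt0_muley ?leey // lte_fin mulr_gt0 // powR_gt0.
have O1E : O1 = (fine O1)%:E.
  rewrite fineK // ge0_fin_numE ?ltey //.
  exact: le_trans (integral_ge0 _ _) (L1_le_O1 d dd).
rewrite O1E -EFinM; rewrite O1E in L1_le_O1; set r := fine O1 in L1_le_O1 *.
apply: ge_ereal_sup => _ [h /= /[!in_itv] /= hd <-].
by have := Lqnorm_weighted_Delta2_le cf d0 (L1_le_O1 d dd) hq erefl linL linR hd
  (L1_le_O1 h hd).
Qed.
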